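(* In the setting below, let $x\in\{0,1\}^n$ satisfy $w_{\mathcal{I}}(x)\in[W-w_{\max},W]$. With probability at least $1-1/n^2$ (over the random partition), for all $\ell\in\{0,\dots,\log_2 q\}$ and all $j\in\{1,\dots,q/2^\ell\}$: (i) $w_{\mathcal{I}^\ell_j}(x)\in J^\ell$, and (ii) $C^\ell_j[w_{\mathcal{I}^\ell_j}(x)]\ge p_{\mathcal{I}^\ell_j}(x)$.
   Context: Setting: a 0-1 Knapsack instance with items $\mathcal{I}=\{1,\dots,n\}$, $n\ge 3$, profits $p_i\in\mathbb{N}$, weights $w_i\in\mathbb{N}$, $w_{\max}=\max_i w_i$, budget $W$ with $w_{\max}\le W\le n\,w_{\max}$. For $\mathcal{J}\subseteq\mathcal{I}$ and $x\in\{0,1\}^n$, $w_{\mathcal{J}}(x)=\sum_{i\in\mathcal{J}}w_ix_i$, $p_{\mathcal{J}}(x)=\sum_{i\in\mathcal{J}}p_ix_i$, and the profit sequence is $\mathcal{P}_{\mathcal{J}}[t]=\max\{p_{\mathcal{J}}(x): x\in\{0,1\}^n,\ w_{\mathcal{J}}(x)\le t\}$ for $t\in\mathbb{N}$ (only items of $\mathcal{J}$ count). For reals $a\le b$, $[a..b]:=\{\max(0,\lfloor a\rfloor),\dots,\lceil b\rceil\}$. Let $q$ be a power of $2$ with $1\le q\le W/w_{\max}$, $\Delta:=w_{\max}W/q$, $\eta:=11\ln n$, and for $\ell\in\{0,\dots,\log_2q\}$ let $J^\ell:=[\tfrac{W}{q}2^\ell-\sqrt{\Delta2^\ell}\eta\,..\,\tfrac{W}{q}2^\ell+\sqrt{\Delta2^\ell}\eta]$.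 Assign each item independently uniformly at random to one of groups $\mathcal{I}^0_1,\dots,\mathcal{I}^0_q$, and set $\mathcal{I}^\ell_j=\mathcal{I}^{\ell-1}_{2j-1}\cup\mathcal{I}^{\ell-1}_{2j}$ for $\ell\ge1$, $1\le j\le q/2^\ell$. Define arrays $C^\ell_j$ indexed by $J^\ell$: $C^0_j[t]=\mathcal{P}_{\mathcal{I}^0_j}[t]$ for $t\in J^0$, and for $\ell\ge1$, $k\in J^\ell$: $C^\ell_j[k]=\max\{C^{\ell-1}_{2j-1}[i]+C^{\ell-1}_{2j}[i'] : i,i'\in J^{\ell-1},\ i+i'=k\}$ (maximum of the empty set is $-\infty$). *)

From mathcomp Require Import all_boot.
From Stdlib Require Import Reals ZArith.

Set Implicit Arguments.
Unset Strict Implicit.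
Unset Printing Implicit Defensive.

Definition wmax (n : nat) (w : 'I_n -> nat) : nat := \max_(i < n) w i.

Definition wJ (n : nat) (w : 'I_n -> nat) (J : pred 'I_n) (x : {ffun 'I_n -> bool}) : nat :=
  \sum_(i < n | J i) w i * x i.
Definition pJ (n : nat) (p : 'I_n -> nat) (J : pred 'I_n) (x : {ffun 'I_n -> bool}) : nat :=
  \sum_(i < n | J i) p i * x i.

Definition profitSeq (n : nat) (w p : 'I_n -> nat) (J : pred 'I_n) (t : nat) : nat :=
  \max_(y : {ffun 'I_n -> bool} | wJ w J y <= t) pJ p J y.

(* Stdlib: up r is the unique integer with r < up r <= r + 1, so up r - 1 = floor r. *)
Definition floorR (r : R) : Z := (up r - 1)%Z.
Definition ceilR (r : R) : Z := (- floorR (- r))%Z.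

(* t \in [a..b] = {max(0,floor a), ..., ceil b}; for t : nat the max with 0 is automatic *)
Definition inIntv (a b : R) (t : nat) : bool :=
  (Z.leb (floorR a) (Z.of_nat t) && Z.leb (Z.of_nat t) (ceilR b))%Z.

(* q = 2^k, Delta = wmax * W / q, eta = 11 ln n,
   J^l = [ W/q 2^l - sqrt(Delta 2^l) eta .. W/q 2^l + sqrt(Delta 2^l) eta ] *)
Definition Delta (n : nat) (w : 'I_n -> nat) (W k : nat) : R :=
  (INR (wmax w) * INR W / INR (2 ^ k))%R.
Definition eta (n : nat) : R := (11 * ln (INR n))%R.

Definition inJ (n : nat) (w : 'I_n -> nat) (W k l t : nat) : bool :=
  let c := (INR W / INR (2 ^ k) * INR (2 ^ l))%R in
  let r := (sqrt (Delta w W k * INR (2 ^ l)) * eta n)%R in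
  inIntv (c - r)%R (c + r)%R t.

(* a : {ffun 'I_n -> 'I_(2^k)} assigns item i to group I^0_{(a i)+1} (groups are 1-based).
   I^l_j = I^{l-1}_{2j-1} \cup I^{l-1}_{2j}. *)
Fixpoint inGroup (n k : nat) (a : {ffun 'I_n -> 'I_(2 ^ k)}) (l j : nat) (i : 'I_n) : bool :=
  match l with
  | 0 => (a i).+1 == j
  | l'.+1 => inGroup a l' (2 * j - 1) i || inGroup a l' (2 * j) i
  end.

(* ---------- the arrays C^l_j, values in N \cup {-oo} (None = -oo) ---------- *)

Definition omax (u v : option nat) : option nat :=
  match u, v with
  | None, _ => v
  | _, None => u
  | Some a, Some b => Some (maxn a b)
  end.

Definition oadd (u v : option nat) : option nat :=
  match u, v with
  | Some a, Some b => Some (a + b)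
  | _, _ => None
  end.

(* C l j t, meaningful for t \in J^l (None outside J^l, where the array is undefined). *)
Fixpoint Carr (n : nat) (w p : 'I_n -> nat) (W k : nat) (a : {ffun 'I_n -> 'I_(2 ^ k)})
    (l j t : nat) : option nat :=
  match l with
  | 0 => if inJ w W k 0 t then Some (profitSeq w p (inGroup a 0 j) t) else None
  | l'.+1 =>
      if inJ w W k l t then
        foldr omax None
          [seq oadd (Carr w p W a l' (2 * j - 1) i) (Carr w p W a l' (2 * j) (t - i))
          | i <- iota 0 t.+1 & inJ w W k l' i && inJ w W k l' (t - i)]
      else None
  end.

Definition oge (v : option nat) (m : nat) : bool :=
  if v is Some c then m <= c else false.

Definition goodPartition (n : nat) (w p : 'I_n -> nat) (W k : nat) (x : {ffun 'I_n -> bool})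
    (a : {ffun 'I_n -> 'I_(2 ^ k)}) : bool :=
  [forall l : 'I_k.+1, [forall j : 'I_(2 ^ (k - l)),
     let G := inGroup a l j.+1 in
     inJ w W k l (wJ w G x) && oge (Carr w p W a l j.+1 (wJ w G x)) (pJ p G x)]].

(* The partition is a uniformly random map a : 'I_n -> 'I_q (q = 2^k), so a
   probability is a number of maps divided by q^n.  The proof has two halves.
   - Deterministic half: property (ii) follows from property (i) by induction
     on the level, because the split of w(x) between the two children of a
     group is one of the candidates of the max-plus convolution defining C.
     Hence a bad partition has a group whose weight leaves its interval J^l.
   - Probabilistic half: the weight of the group I^l_(j+1) is the load that a
     random map puts on a block of 2^l targets.  Exponential-moment (Chernoff)
     bounds, proved by counting, show that it deviates from its mean by more
     than sqrt(wmax W 2^l / q) * 11 ln n for at most a 4/n^5 fraction of the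
     maps.  A union bound over the fewer than 2q <= 2n groups concludes. *)

From Pilot Require Import Defs.
From mathcomp Require Import all_boot all_order all_algebra zify.
From Stdlib Require Import Reals.
From mathcomp Require Import Rstruct ring lra.
Import Order.TTheory GRing.Theory Num.Theory.

Set Implicit Arguments.
Unset Strict Implicit.
Unset Printing Implicit Defensive.

(* [Defs] writes powers with Stdlib's [Nat.pow]; we reason with ssrnat's [expn]. *)
Lemma natpowE (m e : nat) : Nat.pow m e = expn m e.
Proof. by elim: e => [|e IH] //=; rewrite expnS IH. Qed.

Section GroupHierarchy.
Variables (n k : nat) (a : {ffun 'I_n -> 'I_(2 ^ k)}).

Lemma inGroupS l j i :
  inGroup a l.+1 j.+1 i = inGroup a l (2 * j).+1 i || inGroup a l (2 * j + 1).+1 i.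
Proof.
have [e1 e2] : 2 * j.+1 - 1 = (2 * j).+1 /\ 2 * j.+1 = (2 * j + 1).+1 by lia.
by rewrite /= e1 e2.
Qed.

Lemma inGroupE l j i : inGroup a l j.+1 i = (a i %/ expn 2 l == j).
Proof.
elim: l j => [|l IH] j; first by rewrite /= expn0 divn1.
rewrite inGroupS !IH expnSr divnMA; set m := _ %/ _; lia.
Qed.

Lemma inGroup_children_disjoint l j i :
  ~~ (inGroup a l (2 * j).+1 i && inGroup a l (2 * j + 1).+1 i).
Proof. rewrite !inGroupE; set m := _ %/ _; lia. Qed.

Lemma sum_inGroupS l j (F : 'I_n -> nat) :
  \sum_(i < n | inGroup a l.+1 j.+1 i) F i =
  \sum_(i < n | inGroup a l (2 * j).+1 i) F i + \sum_(i < n | inGroup a l (2 * j + 1).+1 i) F i.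
Proof.
have disj : [disjoint inGroup a l (2 * j).+1 & inGroup a l (2 * j + 1).+1].
  by apply/pred0P => i /=; apply/negbTE/inGroup_children_disjoint.
rewrite -bigU //; apply: eq_bigl => i; by rewrite inE inGroupS.
Qed.

Lemma wJ_inGroupS (w : 'I_n -> nat) x l j :
  wJ w (inGroup a l.+1 j.+1) x =
  wJ w (inGroup a l (2 * j).+1) x + wJ w (inGroup a l (2 * j + 1).+1) x.
Proof. exact: sum_inGroupS. Qed.

Lemma pJ_inGroupS (p : 'I_n -> nat) x l j :
  pJ p (inGroup a l.+1 j.+1) x =
  pJ p (inGroup a l (2 * j).+1) x + pJ p (inGroup a l (2 * j + 1).+1) x.
Proof. exact: sum_inGroupS. Qed.

End GroupHierarchy.

Lemma oge_foldr_omax (s : seq (option nat)) m :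
  has (oge^~ m) s -> oge (foldr omax None s) m.
Proof.
elim: s => //= e s IH /orP [He | Hs].
  case: e He => // c Hc; case: (foldr omax None s) => [d|] //=.
  exact: leq_trans Hc (leq_maxl _ _).
move: (IH Hs); case: (foldr omax None s) => [d|] // Hd; case: e => [c|] //=.
exact: leq_trans Hd (leq_maxr _ _).
Qed.

Lemma oge_oadd u v m1 m2 : oge u m1 -> oge v m2 -> oge (oadd u v) (m1 + m2).
Proof. by case: u => // c; case: v => //= d; apply: leq_add. Qed.

Section ArraysDominateProfits.
Variables (n : nat) (w p : 'I_n -> nat) (W k : nat) (x : {ffun 'I_n -> bool}).
Variable a : {ffun 'I_n -> 'I_(2 ^ k)}.

Lemma Carr_succ l j t : Carr w p W a l.+1 j.+1 t =
  if inJ w W k l.+1 t then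
    foldr omax None
      [seq oadd (Carr w p W a l (2 * j).+1 i) (Carr w p W a l (2 * j + 1).+1 (t - i))
      | i <- iota 0 t.+1 & inJ w W k l i && inJ w W k l (t - i)]
  else None.
Proof.
have [e1 e2] : 2 * j.+1 - 1 = (2 * j).+1 /\ 2 * j.+1 = (2 * j + 1).+1 by lia.
by rewrite /= e1 e2.
Qed.

Hypothesis weights_in_J : forall l j, l <= k -> j < expn 2 (k - l) ->
  inJ w W k l (wJ w (inGroup a l j.+1) x).

(* Property (ii) follows from (i) by induction on the level: at level 0,
   x restricted to the group is feasible for the profit sequence; at level l+1
   the split of w(x) between the two children is one of the candidate splits
   of the max-plus convolution, since both parts lie in J^l by (i). *)
Lemma Carr_dominates l j : l <= k -> j < expn 2 (k - l) ->
  oge (Carr w p W a l j.+1 (wJ w (inGroup a l j.+1) x)) (pJ p (inGroup a l j.+1) x).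
Proof.
elim: l j => [|l IH] j l_le_k j_lt.
  rewrite /= (weights_in_J l_le_k j_lt) /=.
  exact: (leq_bigmax_cond (F := pJ p (inGroup a 0 j.+1))).
have l_le_k' : l <= k by lia.
have blocks : expn 2 (k - l) = 2 * expn 2 (k - l.+1).
  by rewrite -expnS; congr (expn 2 _); lia.
have j1_lt : 2 * j < expn 2 (k - l) by lia.
have j2_lt : 2 * j + 1 < expn 2 (k - l) by lia.
have parent_in_J := weights_in_J l_le_k j_lt.
rewrite wJ_inGroupS in parent_in_J *; rewrite pJ_inGroupS Carr_succ parent_in_J.
set t1 := wJ w (inGroup a l (2 * j).+1) x.
set t2 := wJ w (inGroup a l (2 * j + 1).+1) x.
apply: oge_foldr_omax; apply/hasP.
exists (oadd (Carr w p W a l (2 * j).+1 t1) (Carr w p W a l (2 * j + 1).+1 (t1 + t2 - t1))).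
  apply/mapP; exists t1 => //.
  rewrite mem_filter mem_iota addKn (weights_in_J l_le_k' j1_lt) (weights_in_J l_le_k' j2_lt) /=.
  lia.
by rewrite addKn; apply: oge_oadd; apply: IH.
Qed.

Lemma goodPartition_of_weights_in_J : goodPartition w p W x a.
Proof.
apply/forallP => l; apply/forallP => j /=.
have l_le_k : l <= k by rewrite -ltnS.
have j_lt : j < expn 2 (k - l) by rewrite -natpowE.
by rewrite weights_in_J //= Carr_dominates.
Qed.

End ArraysDominateProfits.

Local Open Scope ring_scope.

Definition rexp (u : R) : R := exp u.
Arguments rexp u%_ring_scope.

Lemma rexp_gt0 (u : R) : 0 < rexp u.
Proof. exact/RltP/exp_pos. Qed.

Lemma ler_rexp (u v : R) : u <= v -> rexp u <= rexp v.
Proof.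
move=> /RleP uv; apply/RleP.
by case: (Rle_lt_or_eq_dec _ _ uv) => [/exp_increasing/Rlt_le | ->]; [|apply: Rle_refl].
Qed.

Lemma rexpD (u v : R) : rexp (u + v) = rexp u * rexp v.
Proof. exact: exp_plus. Qed.

Lemma rexp0 : rexp 0 = 1.
Proof. exact: exp_0. Qed.

Lemma rexpN (u : R) : rexp u * rexp (- u) = 1.
Proof. by rewrite -rexpD subrr rexp0. Qed.

Lemma rexp_ge1D (u : R) : 1 + u <= rexp u.
Proof. exact/RleP/exp_ineq1_le. Qed.

Lemma rexp_le_quadratic (y : R) : 0 <= y -> y <= 1/2 -> rexp y - 1 <= y + 2 * y ^+ 2.
Proof.
move=> y0 y_half.
have eN : 1 - y <= rexp (- y) := rexp_ge1D _.
have ey := rexp_gt0 y.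
have e1 : rexp y * (1 - y) <= 1.
  by rewrite -[X in _ <= X](rexpN y); apply: ler_wpM2l; [exact: ltW | lra].
have e2 : 1 <= (1 + y + 2 * y ^+ 2) * (1 - y).
  have -> : (1 + y + 2 * y ^+ 2) * (1 - y) = 1 + y ^+ 2 * (1 - 2 * y) by ring.
  have : 0 <= y ^+ 2 * (1 - 2 * y) by apply: mulr_ge0; [exact: sqr_ge0 | lra].
  lra.
have : rexp y <= 1 + y + 2 * y ^+ 2 by rewrite -(ler_pM2r (_ : 0 < 1 - y)); lra.
lra.
Qed.

Lemma rexpN_le_quadratic (y : R) : 0 <= y -> rexp (- y) - 1 <= - y + y ^+ 2.
Proof.
move=> y0.
have ey := rexp_ge1D y.
have eN : 0 < rexp (- y) := rexp_gt0 _.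
have e1 : rexp (- y) * (1 + y) <= 1.
  by rewrite -[X in _ <= X](rexpN y) mulrC; apply: ler_wpM2r; [exact: ltW | lra].
have e2 : 1 <= (1 - y + y ^+ 2) * (1 + y).
  have -> : (1 - y + y ^+ 2) * (1 + y) = 1 + y ^+ 3 by ring.
  have : 0 <= y ^+ 3 by apply: exprn_ge0.
  lra.
have : rexp (- y) <= 1 - y + y ^+ 2 by rewrite -(ler_pM2r (_ : 0 < 1 + y)); lra.
lra.
Qed.

Lemma card_markov (A : finType) (B : pred A) (F : A -> R) (y : R) :
  (forall a, 0 <= F a) -> (forall a, B a -> y <= F a) ->
  #|B|%:R * y <= \sum_(a : A) F a.
Proof.
move=> F_ge0 F_geB; rewrite (bigID B) /=.
have : \sum_(a | B a) y <= \sum_(a | B a) F a by apply: ler_sum => a; apply: F_geB.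
have -> : \sum_(a | B a) y = #|B|%:R * y by rewrite sumr_const mulr_natl.
have : 0 <= \sum_(a | ~~ B a) F a by apply: sumr_ge0 => a _; apply: F_ge0.
lra.
Qed.

(* Chernoff bounds for the uniform random map a : 'I_n -> T (probabilities are
   counts divided by |T|^n).  Item i carries the weight v i, and [load a] is
   the total weight of the items sent into the target set S; its mean is
   rho * V with rho = |S|/|T| and V the total weight. *)
Section ChernoffCount.
Variables (T : finType) (n : nat) (v : 'I_n -> nat) (S : pred T).

Definition load (a : {ffun 'I_n -> T}) : nat := \sum_(i < n | S (a i)) v i.

Local Notation rho := (#|S|%:R / #|T|%:R).
Local Notation V := (\sum_(i < n) (v i)%:R).

Lemma sum_if_in_S (c d : R) :
  \sum_(t : T) (if S t then c else d) = #|S|%:R * c + (#|T| - #|S|)%nat%:R * d.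
Proof.
rewrite (bigID S) /= (eq_bigr (fun _ => c)); last by move=> t ->.
rewrite [X in _ + X](eq_bigr (fun _ => d)); last by move=> t /negbTE ->.
by rewrite !sumr_const -(cardC S) addKn !mulr_natl.
Qed.

(* The moment generating function of the load factorizes over the items,
   since the items are placed independently. *)
Lemma load_mgf (lam : R) :
  \sum_(a : {ffun 'I_n -> T}) rexp (lam * (load a)%:R) =
  \prod_(i < n) (#|T|%:R + #|S|%:R * (rexp (lam * (v i)%:R) - 1)).
Proof.
have split_items (a : {ffun 'I_n -> T}) : rexp (lam * (load a)%:R) =
    \prod_(i < n) rexp (lam * (if S (a i) then v i else 0%nat)%:R).
  rewrite /load big_mkcond natr_sum mulr_sumr.
  exact: (big_morph rexp rexpD rexp0).
rewrite (eq_bigr _ (fun a _ => split_items a)).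
rewrite -(bigA_distr_bigA (fun i t => rexp (lam * (if S t then v i else 0%nat)%:R))).
apply: eq_bigr => i _.
rewrite (eq_bigr (fun t => if S t then rexp (lam * (v i)%:R) else 1)); last first.
  by move=> t _; case: (S t); rewrite ?mulr0 ?rexp0.
by rewrite sum_if_in_S natrB ?max_card // mulr1; ring.
Qed.

Lemma load_mgf_le (lam : R) : (0 < #|T|)%nat ->
  \sum_(a : {ffun 'I_n -> T}) rexp (lam * (load a)%:R) <=
  #|T|%:R ^+ n * rexp (rho * \sum_(i < n) (rexp (lam * (v i)%:R) - 1)).
Proof.
move=> T_gt0; rewrite load_mgf mulr_sumr (big_morph rexp rexpD rexp0).
have tT : 0 < (#|T|%:R : R) by rewrite ltr0n.
have sT : #|S|%:R <= #|T|%:R :> R by rewrite ler_nat max_card.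
have -> : #|T|%:R ^+ n = \prod_(i < n) #|T|%:R :> R by rewrite prodr_const card_ord.
rewrite -big_split /=; apply: ler_prod => i _; set e := rexp _.
have e_gt0 : 0 < e by apply: rexp_gt0.
apply/andP; split.
  have : 0 <= #|S|%:R * e by rewrite mulr_ge0 // ltW.
  nra.
have -> : #|T|%:R + #|S|%:R * (e - 1) = #|T|%:R * (1 + rho * (e - 1)) :> R.
  by field; rewrite gt_eqF.
by apply: ler_wpM2l; [exact: ltW | exact: rexp_ge1D].
Qed.

Lemma chernoff_count (lam t : R) : (0 < #|T|)%nat ->
  #|[pred a : {ffun 'I_n -> T} | t <= lam * (load a)%:R]|%:R * rexp t <=
  #|T|%:R ^+ n * rexp (rho * \sum_(i < n) (rexp (lam * (v i)%:R) - 1)).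
Proof.
move=> T_gt0; apply: le_trans (load_mgf_le lam T_gt0).
apply: card_markov => [a | a]; [exact/ltW/rexp_gt0 | exact: ler_rexp].
Qed.

Arguments chernoff_count lam%_ring_scope t%_ring_scope.

Variables (b c : R).
Hypotheses (b_ge0 : 0 <= b) (v_le_b : forall i, (v i)%:R <= b).
Hypothesis mean_le_c : rho * V <= c.

Lemma load_upper_tail (lam r : R) : (0 < #|T|)%nat -> 0 < lam -> lam * b <= 1/2 ->
  #|[pred a : {ffun 'I_n -> T} | c + r < (load a)%:R]|%:R <=
  #|T|%:R ^+ n * rexp (2 * lam ^+ 2 * b * c - lam * r).
Proof.
move=> T_gt0 lam_gt0 lamb.
have rho_ge0 : 0 <= (rho : R) by rewrite divr_ge0.
have mgf_bound : \sum_(i < n) (rexp (lam * (v i)%:R) - 1) <= (lam + 2 * lam ^+ 2 * b) * V.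
  rewrite mulr_sumr; apply: ler_sum => i _.
  have vi0 : 0 <= ((v i)%:R : R) by [].
  have sq : (lam * (v i)%:R) ^+ 2 <= lam ^+ 2 * b * (v i)%:R.
    by rewrite exprMn -mulrA ler_wpM2l ?sqr_ge0 // expr2 ler_wpM2r.
  have /rexp_le_quadratic : lam * (v i)%:R <= 1/2.
    by apply: le_trans lamb; apply: ler_wpM2l; [exact: ltW | exact: v_le_b].
  move=> /(_ (mulr_ge0 (ltW lam_gt0) vi0)); nra.
have exponent : rho * \sum_(i < n) (rexp (lam * (v i)%:R) - 1) <=
                lam * c + 2 * lam ^+ 2 * b * c.
  have coef : 0 <= lam + 2 * lam ^+ 2 * b.
    have : 0 <= lam ^+ 2 * b by rewrite mulr_ge0 ?sqr_ge0.
    lra.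
  apply: le_trans (ler_wpM2l rho_ge0 mgf_bound) _.
  by rewrite mulrCA -mulrDl; apply: ler_wpM2l.
have count := chernoff_count lam (lam * (c + r)) T_gt0.
have := le_trans count (ler_wpM2l (exprn_ge0 _ (ler0n _ _)) (ler_rexp exponent)).
have -> : lam * c + 2 * lam ^+ 2 * b * c =
          (2 * lam ^+ 2 * b * c - lam * r) + lam * (c + r) by ring.
rewrite rexpD mulrA ler_pM2r ?rexp_gt0 //; apply: le_trans.
rewrite ler_nat; apply: subset_leq_card; apply/subsetP => a; rewrite !inE /= => above.
exact: ler_wpM2l (ltW lam_gt0) _ _ (ltW above).
Qed.

Hypothesis c_le_mean : c - b <= rho * V.

Lemma load_lower_tail (lam r : R) : (0 < #|T|)%nat -> 0 < lam ->
  #|[pred a : {ffun 'I_n -> T} | (load a)%:R < c - r]|%:R <=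
  #|T|%:R ^+ n * rexp (lam * b + lam ^+ 2 * b * c - lam * r).
Proof.
move=> T_gt0 lam_gt0.
have rho_ge0 : 0 <= (rho : R) by rewrite divr_ge0.
have mgf_bound : \sum_(i < n) (rexp (- lam * (v i)%:R) - 1) <= (- lam + lam ^+ 2 * b) * V.
  rewrite mulr_sumr; apply: ler_sum => i _.
  have vi0 : 0 <= ((v i)%:R : R) by [].
  have sq : (lam * (v i)%:R) ^+ 2 <= lam ^+ 2 * b * (v i)%:R.
    by rewrite exprMn -mulrA ler_wpM2l ?sqr_ge0 // expr2 ler_wpM2r.
  have := rexpN_le_quadratic (mulr_ge0 (ltW lam_gt0) vi0).
  rewrite -mulNr; nra.
have exponent : rho * \sum_(i < n) (rexp (- lam * (v i)%:R) - 1) <=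
                - lam * (c - b) + lam ^+ 2 * b * c.
  apply: le_trans (ler_wpM2l rho_ge0 mgf_bound) _.
  rewrite mulrCA; set m := rho * V.
  have lo : lam * (c - b) <= lam * m by apply: ler_wpM2l; [exact: ltW | exact: c_le_mean].
  have hi : lam ^+ 2 * b * m <= lam ^+ 2 * b * c.
    by apply: ler_wpM2l; [rewrite mulr_ge0 ?sqr_ge0 | exact: mean_le_c].
  nra.
have count := chernoff_count (- lam) (- lam * (c - r)) T_gt0.
have := le_trans count (ler_wpM2l (exprn_ge0 _ (ler0n _ _)) (ler_rexp exponent)).
have -> : - lam * (c - b) + lam ^+ 2 * b * c =
          (lam * b + lam ^+ 2 * b * c - lam * r) + - lam * (c - r) by ring.
rewrite rexpD mulrA ler_pM2r ?rexp_gt0 //; apply: le_trans.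
rewrite ler_nat; apply: subset_leq_card; apply/subsetP => a; rewrite !inE /= => below.
by rewrite !mulNr lerN2; apply: ler_wpM2l (ltW lam_gt0) _ _ (ltW below).
Qed.

(* Both tails at distance r = sqrt(b c) * z, using lam = 1 / (2 sqrt(b c)),
   for which 2 lam^2 b c = 1/2, lam b <= 1/2 (as b <= c) and lam r = z/2. *)
Lemma load_two_sided_tail (z : R) : (0 < #|T|)%nat -> 0 < b -> b <= c ->
  #|[pred a : {ffun 'I_n -> T} | (load a)%:R < c - Num.sqrt (b * c) * z]|%:R +
  #|[pred a : {ffun 'I_n -> T} | c + Num.sqrt (b * c) * z < (load a)%:R]|%:R <=
  #|T|%:R ^+ n * (rexp (3/4 - z / 2) + rexp (1/2 - z / 2)).
Proof.
move=> T_gt0 b_gt0 b_le_c; set s := Num.sqrt (b * c).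
have s_sq : s ^+ 2 = b * c by rewrite sqr_sqrtr // mulr_ge0 // ltW //; lra.
have s_gt0 : 0 < s by rewrite sqrtr_gt0 mulr_gt0 //; lra.
have b_le_s : b <= s.
  have : b * b <= s * s by rewrite -[s * s]expr2 s_sq ler_wpM2l // ltW.
  nra.
set lam := (2 * s)^-1.
have lam_gt0 : 0 < lam by rewrite invr_gt0; lra.
have lam_s : lam * s = 1/2 by rewrite /lam; field; lra.
have lamb : lam * b <= 1/2 by rewrite -lam_s ler_wpM2l // ltW.
have lam2bc : lam ^+ 2 * b * c = 1/4 by rewrite -mulrA -s_sq /lam; field; lra.
have lam_r : lam * (s * z) = z / 2 by rewrite mulrA lam_s; lra.
have upper := load_upper_tail (s * z) T_gt0 lam_gt0 lamb.
have lower := load_lower_tail (s * z) T_gt0 lam_gt0.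
rewrite lam_r in upper lower.
have Tn_ge0 : 0 <= (#|T|%:R : R) ^+ n by rewrite exprn_ge0.
have upper' : #|[pred a | c + s * z < (load a)%:R]|%:R <= #|T|%:R ^+ n * rexp (1/2 - z / 2).
  by apply: le_trans upper _; rewrite ler_wpM2l // ler_rexp //; lra.
have lower' : #|[pred a | (load a)%:R < c - s * z]|%:R <= #|T|%:R ^+ n * rexp (3/4 - z / 2).
  by apply: le_trans lower _; rewrite ler_wpM2l // ler_rexp //; lra.
by rewrite mulrDr; apply: lerD.
Qed.

End ChernoffCount.

Lemma inIntv_outside (lo hi : R) (t : nat) : ~~ inIntv lo hi t -> t%:R < lo \/ hi < t%:R.
Proof.
rewrite /inIntv /ceilR /floorR -INRE INR_IZR_INZ.
have [_ /RleP up_lo] := archimed lo.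
have [_ /RleP up_hi] := archimed (- hi).
rewrite !RealsE in up_lo up_hi.
case/nandP => /negbTE/Z.leb_nle out; [left | right].
  have /IZR_le/RleP : (Z.of_nat t <= up lo - 2)%Z by lia.
  rewrite minus_IZR !RealsE /=; lra.
have /IZR_le/RleP : (2 - up (- hi) <= Z.of_nat t)%Z by lia.
rewrite minus_IZR !RealsE /=; lra.
Qed.

Lemma ln_ge1 (n : nat) : (3 <= n)%nat -> 1 <= ln n%:R.
Proof.
move=> n3; have n_ge3 : 3 <= (n%:R : R) by rewrite ler_nat.
have e_le3 : rexp 1 <= 3 by apply/RleP; rewrite -R1E; apply: exp_le_3.
rewrite leNgt; apply/negP => /RltP /exp_increasing /RltP.
rewrite exp_ln; last by apply/RltP; rewrite R0E; lra.
rewrite -[exp _]/(rexp 1); lra.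
Qed.

Lemma rexp_Nln_pow (n e : nat) : (0 < n)%nat -> rexp (- (e%:R * ln n%:R)) = (n%:R ^+ e)^-1.
Proof.
move=> n_gt0; have n_pos : (0 < INR n)%R by apply/RltP; rewrite INRE ltr0n.
rewrite -!INRE -RmultE -ln_pow // /rexp -RoppE exp_Ropp exp_ln.
  by rewrite !RealsE.
exact: pow_lt.
Qed.

Lemma eta_tails (n : nat) : (3 <= n)%nat ->
  rexp (1/2 - eta n / 2) + rexp (3/4 - eta n / 2) <= 4 / n%:R ^+ 5.
Proof.
move=> n3.
have ln1 := ln_ge1 n3.
have etaE : eta n = 11 * ln n%:R by rewrite /eta !RealsE.
have n5 : rexp (- (5 * ln n%:R)) = (n%:R ^+ 5)^-1 by rewrite rexp_Nln_pow //; lia.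
have inv_gt0 : 0 < ((n%:R : R) ^+ 5)^-1 by rewrite invr_gt0 exprn_gt0 // ltr0n; lia.
have tail1 : rexp (1/2 - eta n / 2) <= (n%:R ^+ 5)^-1.
  by rewrite -n5; apply: ler_rexp; rewrite etaE; lra.
have tail2 : rexp (3/4 - eta n / 2) <= rexp (1/4) * (n%:R ^+ 5)^-1.
  by rewrite -n5 -rexpD; apply: ler_rexp; rewrite etaE; lra.
have e_quarter : rexp (1/4) <= 3.
  apply: le_trans (ler_rexp (_ : 1/4 <= 1)) _; first lra.
  by apply/RleP; rewrite -R1E; apply: exp_le_3.
have : rexp (1/4) * (n%:R ^+ 5)^-1 <= 3 * (n%:R ^+ 5)^-1 by rewrite ler_pM2r.
rewrite mulrC [4 / _]mulrC in tail2 *; lra.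
Qed.

(* The interval J^l in closed form: centre W 2^l / q and radius
   sqrt(wmax * centre) * eta, since Delta 2^l = wmax * centre. *)
Definition centre (W k l : nat) := (W%:R : R) / (expn 2 k)%:R * (expn 2 l)%:R.
Definition radius (n : nat) (w : 'I_n -> nat) (W k l : nat) :=
  Num.sqrt ((wmax w)%:R * centre W k l) * eta n.

Lemma inJ_outside (n : nat) (w : 'I_n -> nat) (W k l t : nat) : ~~ inJ w W k l t ->
  t%:R < centre W k l - radius w W k l \/ centre W k l + radius w W k l < t%:R.
Proof.
move/inIntv_outside; rewrite /Defs.Delta !RealsE !natpowE /radius /centre.
by rewrite -!mulrA [X in Num.sqrt X]mulrA.
Qed.

Definition block (k l j : nat) : pred 'I_(2 ^ k) :=
  [pred t : 'I_(2 ^ k) | (val t %/ expn 2 l == j)%nat].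

Lemma card_divn_fiber (q d j : nat) : (0 < d)%nat -> (j * d + d <= q)%nat ->
  #|[pred t : 'I_q | (t %/ d == j)%nat]| = d.
Proof.
move=> d_gt0 jd_le_q.
have lt_q (u : 'I_d) : (j * d + u < q)%nat by have := ltn_ord u; lia.
pose f (u : 'I_d) : 'I_q := Ordinal (lt_q u).
have f_inj : injective f by move=> u1 u2 /(congr1 val) /= eq_u; apply: val_inj => /=; lia.
rewrite -[RHS](card_ord d) -(card_imset (mem 'I_d) f_inj).
apply: eq_card => t /=; rewrite inE; apply/idP/imsetP => [/eqP t_j | [u _ ->] /=].
  have mod_lt : (t %% d < d)%nat by rewrite ltn_mod.
  by exists (Ordinal mod_lt) => //; apply: val_inj; rewrite /= {1}(divn_eq t d) t_j addnC.
by rewrite divnMDl // divn_small ?addn0.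
Qed.

Lemma card_block (k l j : nat) : (l <= k)%nat -> (j < expn 2 (k - l))%nat ->
  #|@block k l j| = expn 2 l.
Proof.
move=> l_le_k j_lt; apply: card_divn_fiber; first by rewrite expn_gt0.
by rewrite natpowE -mulSnr -(subnK l_le_k) expnD leq_mul2r j_lt orbT.
Qed.

Lemma wJ_inGroup_load (n : nat) (w : 'I_n -> nat) (k : nat) (x : {ffun 'I_n -> bool})
    (a : {ffun 'I_n -> 'I_(2 ^ k)}) (l j : nat) :
  wJ w (inGroup a l j.+1) x = load (fun i => w i * x i)%nat (block l j) a.
Proof. by apply: eq_bigl => i; rewrite inGroupE. Qed.

Section GroupWeightConcentration.
Variables (n : nat) (w : 'I_n -> nat) (W k : nat) (x : {ffun 'I_n -> bool}).
Hypotheses (n_ge3 : (3 <= n)%nat) (wmax_gt0 : (0 < wmax w)%nat).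
Hypotheses (q_wmax_le_W : (expn 2 k * wmax w <= W)%nat).
Hypotheses (W_le_wx : (W <= wJ w predT x + wmax w)%nat) (wx_le_W : (wJ w predT x <= W)%nat).
Variables (l j : nat).
Hypotheses (l_le_k : (l <= k)%nat) (j_lt : (j < expn 2 (k - l))%nat).

Lemma group_weight_outside_J :
  #|[pred a : {ffun 'I_n -> 'I_(2 ^ k)} | ~~ inJ w W k l (wJ w (inGroup a l j.+1) x)]|%:R
  <= ((expn 2 k)%:R : R) ^+ n * (4 / n%:R ^+ 5).
Proof.
pose v i := (w i * x i)%nat.
set S := @block k l j.
set b : R := (wmax w)%:R; set q : R := (expn 2 k)%:R; set P : R := (expn 2 l)%:R.
set c := centre W k l.
have T_gt0 : (0 < #|'I_(2 ^ k)|)%nat by rewrite card_ord natpowE expn_gt0.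
have T_card : #|'I_(2 ^ k)|%:R = q by rewrite card_ord natpowE.
have b_gt0 : 0 < b by rewrite ltr0n.
have v_le_b i : (v i)%:R <= b.
  rewrite ler_nat; apply: leq_trans (leq_bigmax (F := w) i).
  by rewrite /v; case: (x i); rewrite ?muln1 ?muln0.
have q_gt0 : 0 < q by rewrite ltr0n expn_gt0.
have P_ge1 : 1 <= P by rewrite ler1n expn_gt0.
have P_le_q : P <= q by rewrite ler_nat leq_pexp2l.
have c_eq : c = P / q * W%:R by rewrite /c /centre -/q -/P; ring.
(* The mean load (P/q) w(x) lies in [c - wmax, c], since w(x) lies in [W - wmax, W]. *)
have mean_eq : #|S|%:R / #|'I_(2 ^ k)|%:R * \sum_(i < n) (v i)%:R = P / q * (wJ w predT x)%:R.
  by rewrite card_block // T_card natr_sum.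
have Pq_ge0 : 0 <= P / q by rewrite divr_ge0 // ltW.
have mean_le_c : #|S|%:R / #|'I_(2 ^ k)|%:R * \sum_(i < n) (v i)%:R <= c.
  by rewrite mean_eq c_eq ler_wpM2l // ler_nat.
have c_le_mean : c - b <= #|S|%:R / #|'I_(2 ^ k)|%:R * \sum_(i < n) (v i)%:R.
  rewrite mean_eq c_eq.
  have : P / q * (W%:R - b) <= P / q * (wJ w predT x)%:R.
    by rewrite ler_wpM2l // lerBlDr -natrD ler_nat.
  have Pq_le1 : P / q <= 1 by rewrite ler_pdivrMr // mul1r.
  have : P / q * b <= b by rewrite -[leRHS]mul1r ler_wpM2r // ltW.
  nra.
have b_le_c : b <= c.
  have : b <= W%:R / q by rewrite ler_pdivlMr // mulrC -natrM ler_nat.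
  have : 0 <= W%:R / q by rewrite divr_ge0 // ltW.
  rewrite /c /centre; nra.
have tails := load_two_sided_tail (ltW b_gt0) v_le_b mean_le_c c_le_mean (eta n) T_gt0 b_gt0 b_le_c.
rewrite T_card -/(radius w W k l) in tails.
set L := [pred a : {ffun 'I_n -> 'I_(2 ^ k)} | (load v S a)%:R < c - radius w W k l].
set U := [pred a : {ffun 'I_n -> 'I_(2 ^ k)} | c + radius w W k l < (load v S a)%:R].
set Bad := [pred a : {ffun 'I_n -> 'I_(2 ^ k)} | ~~ inJ w W k l (wJ w (inGroup a l j.+1) x)].
have card_bad : (#|Bad| <= #|L| + #|U|)%nat.
  rewrite -cardUI; apply: leq_trans (leq_addr _ _).
  apply/subset_leq_card/subsetP => a; rewrite !inE /= => /inJ_outside.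
  by rewrite wJ_inGroup_load => -[-> | ->]; rewrite ?orbT.
apply: le_trans (_ : _ <= (#|L| + #|U|)%nat%:R) _; first by rewrite ler_nat.
apply: le_trans (_ : _ <= q ^+ n * (rexp (3/4 - eta n / 2) + rexp (1/2 - eta n / 2))) _.
  by rewrite natrD.
by rewrite ler_wpM2l ?exprn_ge0 ?(ltW q_gt0) // addrC eta_tails.
Qed.

End GroupWeightConcentration.

Lemma card_union_bound (A I : finType) (B : pred A) (F : I -> pred A) :
  (forall a, B a -> exists i, F i a) -> (#|B| <= \sum_(i : I) #|F i|)%nat.
Proof.
move=> cover; rewrite -sum1_card.
apply: (@leq_trans (\sum_(a : A) \sum_(i : I) F i a)).
  rewrite big_mkcond; apply: leq_sum => a _.
  case: ifP => // aB; have [i Fi] := cover a aB.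
  by rewrite (bigD1 i) //= Fi.
rewrite exchange_big; apply: leq_sum => i _.
by rewrite -sum1_card [X in (_ <= X)%nat]big_mkcond; apply: leq_sum => a _; rewrite unfold_in; case: (F i a).
Qed.

Lemma sum_expn2_lt (k : nat) : (\sum_(l < k.+1) expn 2 (k - l) < expn 2 k.+1)%nat.
Proof.
elim: k => [|k IH]; first by rewrite big_ord1.
rewrite big_ord_recl subn0 [expn 2 k.+2]expnS.
rewrite (eq_bigr (fun i : 'I_k.+1 => expn 2 (k - i))) => [|i _]; last first.
  by rewrite /bump /= ?add1n subSS.
by rewrite mul2n -addnn ltn_add2l.
Qed.

Section BadPartitions.
Variables (n : nat) (w p : 'I_n -> nat) (W k : nat) (x : {ffun 'I_n -> bool}).
Hypotheses (n_ge3 : (3 <= n)%nat) (wmax_gt0 : (0 < wmax w)%nat) (W_le : (W <= n * wmax w)%nat).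
Hypotheses (q_wmax_le_W : (expn 2 k * wmax w <= W)%nat).
Hypotheses (W_le_wx : (W <= wJ w predT x + wmax w)%nat) (wx_le_W : (wJ w predT x <= W)%nat).

Lemma bad_partition_witness (a : {ffun 'I_n -> 'I_(2 ^ k)}) :
  ~~ goodPartition w p W x a ->
  [exists l : 'I_k.+1, [exists j : 'I_(2 ^ (k - l)), ~~ inJ w W k l (wJ w (inGroup a l j.+1) x)]].
Proof.
apply: contraNT => /existsPn no_bad_group.
apply: goodPartition_of_weights_in_J => l j l_le_k j_lt.
have l_lt : (l < k.+1)%nat by [].
have j_lt' : (j < 2 ^ (k - l))%nat by rewrite natpowE.
by have /existsPn /(_ (Ordinal j_lt')) := no_bad_group (Ordinal l_lt); rewrite negbK.
Qed.

(* The bad partitions form at most a 1/n^2 fraction of all q^n assignments: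
   by the union bound over the fewer than 2q <= 2n groups, each contributing
   at most q^n * 4/n^5. *)
Lemma card_bad_partitions :
  #|[set a : {ffun 'I_n -> 'I_(2 ^ k)} | ~~ goodPartition w p W x a]|%:R
  <= ((expn 2 k)%:R : R) ^+ n / n%:R ^+ 2.
Proof.
set q : R := (expn 2 k)%:R; set C := q ^+ n * (4 / n%:R ^+ 5).
pose Bad (l j : nat) :=
  [pred a : {ffun 'I_n -> 'I_(2 ^ k)} | ~~ inJ w W k l (wJ w (inGroup a l j.+1) x)].
have union : (#|[set a : {ffun 'I_n -> 'I_(2 ^ k)} | ~~ goodPartition w p W x a]| <=
              \sum_(l < k.+1) \sum_(j : 'I_(2 ^ (k - l))) #|Bad l j|)%nat.
  have -> : #|[set a : {ffun 'I_n -> 'I_(2 ^ k)} | ~~ goodPartition w p W x a]| =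
            #|[pred a : {ffun 'I_n -> 'I_(2 ^ k)} | ~~ goodPartition w p W x a]|.
    by apply: eq_card => a; rewrite inE.
  apply: leq_trans (card_union_bound
    (F := fun (l : 'I_k.+1) a => [exists j : 'I_(2 ^ (k - l)), Bad l j a]) _) _.
    by move=> a /bad_partition_witness /existsP.
  by apply: leq_sum => l _; apply: card_union_bound => a /existsP.
have n_gt0 : 0 < (n%:R : R) by rewrite ltr0n; lia.
have C_ge0 : 0 <= C by rewrite mulr_ge0 ?exprn_ge0 ?divr_ge0 ?exprn_ge0 // ltW.
have groups : (\sum_(l < k.+1) expn 2 (k - l) <= 2 * n)%nat.
  have q_le_n : (expn 2 k <= n)%nat by rewrite -(leq_pmul2r wmax_gt0); lia.
  by apply: ltnW; apply: leq_trans (sum_expn2_lt k) _; rewrite expnS leq_mul2l q_le_n.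
apply: le_trans (_ : _ <= C * (2 * n)%nat%:R) _.
  apply: le_trans (_ : _ <= (\sum_(l < k.+1) \sum_(j : 'I_(2 ^ (k - l))) #|Bad l j|)%nat%:R) _.
    by rewrite ler_nat.
  rewrite !natr_sum; apply: le_trans (_ : _ <= \sum_(l < k.+1) C *+ expn 2 (k - l)) _.
    rewrite ler_sum // => l l_le.
    rewrite natr_sum; apply: le_trans (_ : _ <= \sum_(j : 'I_(2 ^ (k - l))) C) _.
      rewrite ler_sum // => j _.
      by apply: group_weight_outside_J => //; [rewrite -ltnS | rewrite -natpowE].
    by rewrite sumr_const card_ord natpowE.
  by rewrite sumrMnr -[C *+ _]mulr_natr ler_wpM2l // ler_nat.
rewrite /C natrM.
have -> : q ^+ n * (4 / n%:R ^+ 5) * (2 * n%:R) = q ^+ n / n%:R ^+ 2 * (8 / n%:R ^+ 2).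
  by field; rewrite gt_eqF.
apply: ler_piMr; first by rewrite divr_ge0 ?exprn_ge0 // ltW.
rewrite ler_pdivrMr ?exprn_gt0 // mul1r expr2.
have : 3 <= (n%:R : R) by rewrite ler_nat.
nra.
Qed.

Lemma good_partitions_fraction :
  1 - 1 / n%:R ^+ 2 <=
  #|[set a : {ffun 'I_n -> 'I_(2 ^ k)} | goodPartition w p W x a]|%:R / ((expn 2 k)%:R : R) ^+ n.
Proof.
set good := [set a | goodPartition w p W x a].
have bad_eq : [set a | ~~ goodPartition w p W x a] = ~: good by apply/setP => a; rewrite !inE.
have total : (#|good| + #|~: good| = expn (expn 2 k) n)%nat.
  by rewrite cardsC card_ffun !card_ord natpowE.
have := card_bad_partitions; rewrite bad_eq.
have -> : #|good|%:R = (expn 2 k)%:R ^+ n - #|~: good|%:R :> R.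
  by rewrite -natrX -total natrD addrK.
have q_gt0 : 0 < ((expn 2 k)%:R : R) ^+ n by rewrite exprn_gt0 // ltr0n expn_gt0.
rewrite mulrBl divff ?gt_eqF // => bad_le.
suff : #|~: good|%:R / ((expn 2 k)%:R : R) ^+ n <= 1 / n%:R ^+ 2 by lra.
by rewrite ler_pdivrMr // mul1r mulrC.
Qed.

End BadPartitions.

Lemma natr_pow_pow2 (k n : nat) : ((Nat.pow (Nat.pow 2 k) n)%:R : R) = ((expn 2 k)%:R : R) ^+ n.
Proof. by rewrite !natpowE natrX. Qed.

Local Close Scope ring_scope.

Theorem mainTheorem7 (n : nat) (w p : 'I_n -> nat) (W k : nat) (x : {ffun 'I_n -> bool}) :
  3 <= n ->
  0 < wmax w ->
  wmax w <= W -> W <= n * wmax w ->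
  2 ^ k * wmax w <= W ->
  W <= wJ w predT x + wmax w -> wJ w predT x <= W ->
  (1 - 1 / (INR n ^ 2) <=
   INR #|[set a : {ffun 'I_n -> 'I_(2 ^ k)} | goodPartition w p W x a]| / INR ((2 ^ k) ^ n))%R.
Proof.
move=> n_ge3 wmax_gt0 _ W_le q_wmax_le_W W_le_wx wx_le_W.
rewrite natpowE in q_wmax_le_W.
have := good_partitions_fraction p n_ge3 wmax_gt0 W_le q_wmax_le_W W_le_wx wx_le_W.
by move/RleP; rewrite !RealsE natr_pow_pow2.
Qed.
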